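(* Let $\mathbf{A}=(A_1,\ldots,A_n)$ be a POVM on $\mathbb{C}^d$ that is $\mathcal{U}$-simulable, where $\mathcal{U}$ is the set of unbiased 2-outcome POVMs on $\mathbb{C}^d$. Then every antipodal operator $\bar A_i$ is positive semidefinite, $\bar{\mathbf{A}}=(\bar A_1,\ldots,\bar A_n)$ is a POVM, and the pair $\{\mathbf{A},\bar{\mathbf{A}}\}$ is jointly measurable.
   Context: A POVM on $\mathbb{C}^d$ with $n$ outcomes is a tuple $\mathbf{A}=(A_1,\ldots,A_n)$ of positive semidefinite operators with $\sum_a A_a=\mathbb{I}$ (some effects may be zero). Given a set $\mathcal{B}=\{\mathbf{B}^{(j)}\}_j$ of POVMs, a POVM $\mathbf{A}$ with $n$ outcomes is $\mathcal{B}$-simulable if there are a probability distribution $p(j)$ over (finitely many) elements of $\mathcal{B}$ and conditional probability distributions $q(i|j,i')$ (over $i\in\{1,\ldots,n\}$, for each $j$ and each outcome $i'$ of $\mathbf{B}^{(j)}$) such that $A_i=\sum_j p(j)\sum_{i'}q(i|j,i')B^{(j)}_{i'}$ for all $i$. Every Hermitian operator on $\mathbb{C}^d$ can be written uniquely as $A=a\mathbb{I}+\vec v\cdot\vec\lambda$ with $a\in\mathbb{R}$, $\vec v\in\mathbb{R}^{d^2-1}$, where $\vec\lambda=(\lambda_1,\ldots,\lambda_{d^2-1})$ is a fixed tuple of traceless Hermitian operators which together with $\mathbb{I}$ form a basis of the real space of Hermitian operators (e.g. Pauli matrices for $d=2$); here $a=\mathrm{Tr}(A)/d$. The antipodal operator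 of $A$ is $\bar A=a\mathbb{I}-\vec v\cdot\vec\lambda=\frac{2\mathrm{Tr}(A)}{d}\mathbb{I}-A$. A 2-outcome POVM is unbiased if it has the form $(\tfrac12\mathbb{I}+\vec v\cdot\vec\lambda,\ \tfrac12\mathbb{I}-\vec v\cdot\vec\lambda)$. A pair of POVMs $\mathbf{A}$ ($n_1$ outcomes), $\mathbf{A}'$ ($n_2$ outcomes) is jointly measurable if there is a POVM $(M_{ab})$ with $\sum_b M_{ab}=A_a$ and $\sum_a M_{ab}=A'_b$ for all $a,b$. *)

(* Operators on C^d are d x d matrices over an arbitrary
   numeric algebraically closed field C (e.g. algC); this covers the complex case. *)
From HB Require Import structures.
From mathcomp Require Import all_boot all_order all_algebra.
Set Implicit Arguments. Unset Strict Implicit. Unset Printing Implicit Defensive.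
Import Order.TTheory GRing.Theory Num.Theory.
Local Open Scope ring_scope.

Definition adjmx (C : numClosedFieldType) (m n : nat) (A : 'M[C]_(m, n))
  : 'M[C]_(n, m) := (map_mx Num.conj A)^T.

Definition hermitian (C : numClosedFieldType) (d : nat) (A : 'M[C]_d) : Prop :=
  adjmx A = A.

Definition psd (C : numClosedFieldType) (d : nat) (A : 'M[C]_d) : Prop :=
  hermitian A /\ forall v : 'cV[C]_d, 0 <= (adjmx v *m A *m v) 0 0.

Definition is_povm (C : numClosedFieldType) (d k : nat) (A : 'I_k -> 'M[C]_d)
  : Prop :=
  (forall a, psd (A a)) /\ \sum_(a < k) A a = 1%:M.

(* unbiased 2-outcome POVM: (1/2 I + X, 1/2 I - X) with X = v.lambda, i.e.
   X an arbitrary traceless Hermitian operator *)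
Definition unbiased (C : numClosedFieldType) (d : nat) (B : 'I_2 -> 'M[C]_d)
  : Prop :=
  is_povm B /\
  exists X : 'M[C]_d, hermitian X /\ \tr X = 0 /\
    B ord0 = (2^-1)%:M + X /\ B ord_max = (2^-1)%:M - X.

Definition simulable (C : numClosedFieldType) (d k : nat)
  (S : ('I_k -> 'M[C]_d) -> Prop) (n : nat) (A : 'I_n -> 'M[C]_d) : Prop :=
  exists (m : nat) (p : 'I_m -> C) (B : 'I_m -> 'I_k -> 'M[C]_d)
         (q : 'I_m -> 'I_k -> 'I_n -> C),
    (forall j, S (B j)) /\
    (forall j, 0 <= p j) /\ \sum_(j < m) p j = 1 /\
    (forall j i' i, 0 <= q j i' i) /\
    (forall j i', \sum_(i < n) q j i' i = 1) /\
    (forall i, A i = \sum_(j < m) p j *: \sum_(i' < k) q j i' i *: B j i').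

Definition antipodal (C : numClosedFieldType) (d : nat) (A : 'M[C]_d)
  : 'M[C]_d := (2 * \tr A / d%:R)%:M - A.

Definition jointly_measurable (C : numClosedFieldType) (d n1 n2 : nat)
  (A : 'I_n1 -> 'M[C]_d) (A' : 'I_n2 -> 'M[C]_d) : Prop :=
  exists M : 'I_n1 -> 'I_n2 -> 'M[C]_d,
    (forall a b, psd (M a b)) /\
    \sum_(a < n1) \sum_(b < n2) M a b = 1%:M /\
    (forall a, \sum_(b < n2) M a b = A a) /\
    (forall b, \sum_(a < n1) M a b = A' b).

(* The antipode of an unbiased effect (1/2 + X, 1/2 - X) is the other effect
   of the same measurement, and taking antipodes is linear.  Hence if A is
   obtained from unbiased measurements B_j by classical mixing p and
   post-processing q, then its antipode is obtained from the same B_j and p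
   with the post-processing q composed with the swap of the two outcomes.
   Two simulations sharing the measurements B_j are jointly measurable: run
   B_j with probability p_j and post-process its outcome with both
   post-processings independently. *)
From Pilot Require Import Defs.
From HB Require Import structures.
From mathcomp Require Import all_boot all_order all_algebra.
From mathcomp Require Import ring.
Import Order.TTheory GRing.Theory Num.Theory.
Local Open Scope ring_scope.

Set Implicit Arguments.
Unset Strict Implicit.
Unset Printing Implicit Defensive.

Section PositiveSemidefinite.
Variables (C : numClosedFieldType) (d : nat).
Implicit Types (A B : 'M[C]_d).

(* Unqualified, [hermitian] is the sesquilinear-form notation of MathComp. *)
Lemma hermitianE A : Defs.hermitian A -> forall i j, Num.conj (A j i) = A i j.
Proof. by move=> hA i j; have := congr1 (fun M : 'M[C]_d => M i j) hA; rewrite !mxE. Qed.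

Lemma psd0 : psd (0 : 'M[C]_d).
Proof.
split; first by apply/matrixP=> i j; rewrite !mxE (rmorph0 Num.conj).
by move=> v; rewrite mulmx0 mul0mx mxE.
Qed.

Lemma psdD A B : psd A -> psd B -> psd (A + B).
Proof.
move=> [hA A_ge0] [hB B_ge0]; split.
  apply/matrixP=> i j; rewrite !mxE (rmorphD Num.conj).
  by congr (_ + _); exact: hermitianE.
by move=> v; rewrite mulmxDr mulmxDl mxE addr_ge0.
Qed.

Lemma psdZ (c : C) A : 0 <= c -> psd A -> psd (c *: A).
Proof.
move=> c_ge0 [hA A_ge0]; split.
  apply/matrixP=> i j; rewrite !mxE (rmorphM Num.conj).
  by congr (_ * _); [exact: geC0_conj | exact: hermitianE].
by move=> v; rewrite -scalemxAr -scalemxAl mxE mulr_ge0.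
Qed.

Lemma psd_sum (I : finType) (F : I -> 'M[C]_d) :
  (forall i, psd (F i)) -> psd (\sum_i F i).
Proof. by move=> F_psd; apply: (big_ind (@psd C d)); [exact: psd0 | exact: psdD |]. Qed.

End PositiveSemidefinite.

Section Antipodal.
Variables (C : numClosedFieldType) (d : nat).
Implicit Types (A B : 'M[C]_d).

Lemma antipodalD A B : antipodal (A + B) = antipodal A + antipodal B.
Proof. by rewrite /antipodal mxtraceD mulrDr mulrDl raddfD /= opprD addrACA. Qed.

Lemma antipodal0 : antipodal (0 : 'M[C]_d) = 0.
Proof. by rewrite /antipodal mxtrace0 mulr0 mul0r raddf0 subr0. Qed.

Lemma antipodalZ (c : C) A : antipodal (c *: A) = c *: antipodal A.
Proof. by rewrite /antipodal mxtraceZ scalerBr scale_scalar_mx mulrCA !mulrA. Qed.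

Lemma antipodal_sum (I : finType) (F : I -> 'M[C]_d) :
  antipodal (\sum_i F i) = \sum_i antipodal (F i).
Proof. exact: (big_morph _ antipodalD antipodal0). Qed.

Lemma antipodal_half_add (X : 'M[C]_d) : (0 < d)%N -> \tr X = 0 ->
  antipodal ((2^-1)%:M + X) = (2^-1)%:M - X.
Proof.
move=> d_gt0 trX; rewrite /antipodal mxtraceD mxtrace_scalar trX addr0.
have two_neq0 : (2 : C) != 0 by rewrite pnatr_eq0.
have d_neq0 : (d%:R : C) != 0 by rewrite pnatr_eq0 -lt0n.
rewrite -(mulr_natr (2^-1 : C) d) mulrA mulfV // mul1r mulfV //.
by apply/matrixP=> i j; rewrite !mxE; case: (i == j); rewrite /= ?mulr0n; field.
Qed.

Lemma antipodal_unbiased (B : 'I_2 -> 'M[C]_d) : (0 < d)%N -> unbiased B ->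
  forall i, antipodal (B i) = B (rev_ord i).
Proof.
move=> d_gt0 [_ [X [_ [trX [B0 B1]]]]] i.
have [->|->] : i = ord0 \/ i = ord_max.
  by case: i => [[|[|//]]] ?; [left|right]; apply/val_inj.
  rewrite (_ : rev_ord _ = ord_max); last exact/val_inj.
  by rewrite B0 B1 antipodal_half_add.
rewrite (_ : rev_ord _ = ord0); last exact/val_inj.
by rewrite B1 B0 (@antipodal_half_add (- X)) ?opprK // linearN /= trX oppr0.
Qed.

End Antipodal.

Section Simulation.
Variables (C : numClosedFieldType) (d m k : nat).
Variables (p : 'I_m -> C) (B : 'I_m -> 'I_k -> 'M[C]_d).
Hypotheses (p_ge0 : forall j, 0 <= p j) (p_sum1 : \sum_j p j = 1).
Hypothesis B_povm : forall j, is_povm (B j).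

Definition simulation (n : nat) (q : 'I_m -> 'I_k -> 'I_n -> C) (i : 'I_n) :=
  \sum_j p j *: \sum_i' q j i' i *: B j i'.

Definition stochastic (n : nat) (q : 'I_m -> 'I_k -> 'I_n -> C) :=
  (forall j i' i, 0 <= q j i' i) /\ (forall j i', \sum_i q j i' i = 1).

Lemma sum_simulation (n : nat) (q : 'I_m -> 'I_k -> 'I_n -> C) :
  \sum_i simulation q i = \sum_j p j *: \sum_i' (\sum_i q j i' i) *: B j i'.
Proof.
rewrite exchange_big; apply: eq_bigr => j _.
rewrite -scaler_sumr exchange_big; congr (_ *: _).
by apply: eq_bigr => i' _; rewrite scaler_suml.
Qed.

Lemma psd_simulation (n : nat) (q : 'I_m -> 'I_k -> 'I_n -> C) i :
  (forall j i', 0 <= q j i' i) -> psd (simulation q i).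
Proof.
move=> q_ge0; apply: psd_sum => j; apply: psdZ => //.
by apply: psd_sum => i'; apply: psdZ => //; exact: (B_povm j).1.
Qed.

Lemma simulation_povm (n : nat) (q : 'I_m -> 'I_k -> 'I_n -> C)
    (A : 'I_n -> 'M[C]_d) :
  stochastic q -> A =1 simulation q -> is_povm A.
Proof.
move=> [q_ge0 q_sum1] A_sim; split=> [i|]; first by rewrite A_sim; exact: psd_simulation.
under eq_bigr do rewrite A_sim.
rewrite sum_simulation (eq_bigr (fun j => p j *: 1%:M)) => [|j _].
  by rewrite -scaler_suml p_sum1 scale1r.
by rewrite -(B_povm j).2; congr (_ *: _); apply: eq_bigr => i' _; rewrite q_sum1 scale1r.
Qed.

Lemma antipodal_simulation (n : nat) (q : 'I_m -> 'I_k -> 'I_n -> C)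
    (A : 'I_n -> 'M[C]_d) :
  (forall j i', antipodal (B j i') = B j (rev_ord i')) -> A =1 simulation q ->
  (fun i => antipodal (A i)) =1 simulation (fun j i' => q j (rev_ord i')).
Proof.
move=> B_anti A_sim i; rewrite A_sim antipodal_sum; apply: eq_bigr => j _.
rewrite antipodalZ antipodal_sum (reindex_inj rev_ord_inj); congr (_ *: _).
by apply: eq_bigr => i' _; rewrite antipodalZ B_anti rev_ordK.
Qed.

Lemma simulation_jointly_measurable (n1 n2 : nat)
    (q1 : 'I_m -> 'I_k -> 'I_n1 -> C) (q2 : 'I_m -> 'I_k -> 'I_n2 -> C)
    (A1 : 'I_n1 -> 'M[C]_d) (A2 : 'I_n2 -> 'M[C]_d) :
  stochastic q1 -> stochastic q2 -> A1 =1 simulation q1 -> A2 =1 simulation q2 ->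
  jointly_measurable A1 A2.
Proof.
move=> [q1_ge0 q1_sum1] [q2_ge0 q2_sum1] A1_sim A2_sim.
pose M a b := \sum_j p j *: \sum_i' (q1 j i' a * q2 j i' b) *: B j i'.
have M_row a : \sum_b M a b = A1 a.
  rewrite A1_sim (sum_simulation (fun j i' b => q1 j i' a * q2 j i' b)).
  apply: eq_bigr => j _; congr (_ *: _); apply: eq_bigr => i' _.
  by rewrite -mulr_sumr q2_sum1 mulr1.
have M_col b : \sum_a M a b = A2 b.
  rewrite A2_sim (sum_simulation (fun j i' a => q1 j i' a * q2 j i' b)).
  apply: eq_bigr => j _; congr (_ *: _); apply: eq_bigr => i' _.
  by rewrite -mulr_suml q1_sum1 mul1r.
exists M; split=> [a b|].
  apply: (@psd_simulation _ (fun j i' b => q1 j i' a * q2 j i' b)) => j i'.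
  exact: mulr_ge0.
split; last by split.
under eq_bigr do rewrite M_row.
exact: (simulation_povm (conj q1_ge0 q1_sum1) A1_sim).2.
Qed.

End Simulation.

Theorem proposition3 (C : numClosedFieldType) (d : nat) (hd : (0 < d)%N)
  (n : nat) (A : 'I_n -> 'M[C]_d) :
  is_povm A -> simulable (@unbiased C d) A ->
  (forall i, psd (antipodal (A i))) /\
  is_povm (fun i => antipodal (A i)) /\
  jointly_measurable A (fun i => antipodal (A i)).
Proof.
(* The hypothesis [is_povm A] is implied by simulability. *)
move=> _ [m [p [B [q [B_unb [p_ge0 [p_sum1 [q_ge0 [q_sum1 A_sim]]]]]]]]].
have B_povm j : is_povm (B j) := (B_unb j).1.
have B_anti j := antipodal_unbiased hd (B_unb j).
have q_stoch : stochastic q by [].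
have q_rev_stoch : stochastic (fun j i' => q j (rev_ord i')).
  by split=> *; [exact: q_ge0 | exact: q_sum1].
have antiA_sim := antipodal_simulation B_anti A_sim.
have antiA_povm := simulation_povm p_ge0 p_sum1 B_povm q_rev_stoch antiA_sim.
split; first exact: antiA_povm.1.
split; first exact: antiA_povm.
exact: (simulation_jointly_measurable p_ge0 p_sum1 B_povm
          q_stoch q_rev_stoch A_sim antiA_sim).
Qed.
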